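(* For every positive integer $n$ there exists an acyclic unique sink orientation $\psi$ of the $n$-dimensional cube which is not $i$-nice for any $i < n-2$.
   Context: Let $Q^n = 2^{[n]}$ be the vertex set of the $n$-cube, with $u,v$ adjacent iff $|u\oplus v|=1$; faces are $F_{J,v}=\{u : v\oplus u\subseteq J\}$ for $J\subseteq[n]$. A unique sink orientation (USO) is an orientation of the cube's edges such that every nonempty face has a unique sink (vertex with no outgoing edges within the face); it is acyclic (an AUSO) if it has no directed cycle. The outmap $s_\psi(v)$ is the set of coordinates $j$ such that the edge $\{v,v\oplus\{j\}\}$ is directed away from $v$; the global sink is the vertex $t$ with $s_\psi(t)=\emptyset$. Let $d(v,u)$ be the length of a shortest directed path from $v$ to $u$ ($\infty$ if none). The reachmap is $r_\psi(v)=s_\psi(v)\cup\{j : \exists u \text{ reachable from } v \text{ by a directed path with } j\in s_\psi(u)\}$. A vertex $v$ is $i$-covered by $u$ if $d(v,u)\le i$ and $r_\psi(u)\subsetneq r_\psi(v)$; $\psi$ is $i$-nice if every vertex other than the global sink is $i$-covered by some vertex. *)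

From mathcomp Require Import all_boot.
Set Implicit Arguments. Unset Strict Implicit. Unset Printing Implicit Defensive.

Definition vertex (n : nat) := {set 'I_n}.

Definition symd (n : nat) (u v : vertex n) : vertex n := (u :\: v) :|: (v :\: u).

Definition adjacent (n : nat) (u v : vertex n) : bool := #|symd u v| == 1.

(* An orientation of the cube's edges, given as the relation
   "the edge {u,v} is directed from u to v". *)
Definition is_orientation (n : nat) (psi : rel (vertex n)) : Prop :=
  (forall u v, psi u v -> adjacent u v) /\
  (forall u v, adjacent u v -> (psi u v (+) psi v u)).

Definition face (n : nat) (J : {set 'I_n}) (v : vertex n) : {set vertex n} :=
  [set u | symd v u \subset J].

Definition is_sink_in (n : nat) (psi : rel (vertex n)) (F : {set vertex n})
  (u : vertex n) : bool :=
  (u \in F) && [forall w, (w \in F) ==> ~~ psi u w].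

Definition is_USO (n : nat) (psi : rel (vertex n)) : Prop :=
  is_orientation psi /\
  forall (J : {set 'I_n}) (v : vertex n),
    (face J v != set0) ->
    exists! u, is_sink_in psi (face J v) u.

Definition acyclic (n : nat) (psi : rel (vertex n)) : Prop :=
  forall u v, psi u v -> ~~ connect psi v u.

Definition is_AUSO (n : nat) (psi : rel (vertex n)) : Prop :=
  is_USO psi /\ acyclic psi.

Definition outmap (n : nat) (psi : rel (vertex n)) (v : vertex n) : {set 'I_n} :=
  [set j | psi v (symd v [set j])].

Definition reachmap (n : nat) (psi : rel (vertex n)) (v : vertex n) : {set 'I_n} :=
  outmap psi v :|:
  [set j | [exists u, connect psi v u && (j \in outmap psi u)]].

Definition dist_le (n : nat) (psi : rel (vertex n)) (v u : vertex n) (i : nat) : Prop :=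
  exists p : seq (vertex n), [/\ size p <= i, path psi v p & last v p = u].

Definition i_covered (n : nat) (psi : rel (vertex n)) (i : nat) (v u : vertex n) : Prop :=
  dist_le psi v u i /\ reachmap psi u \proper reachmap psi v.

Definition is_global_sink (n : nat) (psi : rel (vertex n)) (t : vertex n) : Prop :=
  outmap psi t = set0.

Definition i_nice (n : nat) (psi : rel (vertex n)) (i : nat) : Prop :=
  forall v : vertex n, ~ is_global_sink psi v -> exists u, i_covered psi i v u.

(* Start from the uniform orientation, in which every edge points towards the smaller vertex,
   and reverse a matching of edges: the edges {k}-{k,k+1}, which turn {0}, {0,1}, {1}, {1,2},
   ..., {n-1} into a directed chain, and the edges joining a 3-set not containing 0 to its union
   with {0}.  Reversing a matching changes the outmap u |-> u into an involution moving every
   vertex by at most one coordinate; such an outmap satisfies the Szabo-Welzl criterion, so the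
   orientation is a USO, and an explicit rank function shows that it is acyclic.
   Every vertex of size at least 3 reaches {0}: it can drop any coordinate other than 0, and a
   3-set without 0 can add 0.  From {0} the chain visits every {k}, whose outmap contains k, so
   all these vertices have the full reachmap.  A vertex within distance i < n-2 of the top vertex
   [n] has size at least n - i >= 3, hence the same reachmap as [n], and [n] is not i-covered. *)

From mathcomp Require Import all_boot zify.
Set Implicit Arguments. Unset Strict Implicit. Unset Printing Implicit Defensive.

Section SymmetricDifference.
Variable n : nat.
Implicit Types (u v w A : {set 'I_n}) (j : 'I_n).

Lemma in_symd u v j : (j \in symd u v) = ((j \in u) != (j \in v)).
Proof. by rewrite !inE; case: (j \in u); case: (j \in v). Qed.

Lemma symdC u v : symd u v = symd v u.
Proof. by apply/setP=> j; rewrite !in_symd; case: (j \in u); case: (j \in v). Qed.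

Lemma symdK u A : symd u (symd u A) = A.
Proof. by apply/setP=> j; rewrite !in_symd; case: (j \in u); case: (j \in A). Qed.

Lemma symd_eq0 u v : (symd u v == set0) = (u == v).
Proof.
apply/eqP/eqP=> [/setP uv|->]; last by apply/setP=> j; rewrite in_symd eqxx inE.
by apply/setP=> j; move: (uv j); rewrite in_symd inE; case: (j \in u); case: (j \in v).
Qed.

Lemma symd_set1_in u j : j \in u -> symd u [set j] = u :\ j.
Proof.
move=> ju; apply/setP=> k; rewrite in_symd !inE.
by have [->|] := eqVneq k j; rewrite ?ju //; case: (k \in u).
Qed.

Lemma symd_set1_out u j : j \notin u -> symd u [set j] = j |: u.
Proof.
move=> ju; apply/setP=> k; rewrite in_symd !inE.
by have [->|] := eqVneq k j; rewrite ?(negbTE ju) //; case: (k \in u).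
Qed.

Lemma card_symd_set1 u j : #|u| <= #|symd u [set j]| + 1.
Proof.
have [ju|ju] := boolP (j \in u); last by rewrite symd_set1_out // cardsU1 ju; lia.
by rewrite symd_set1_in // (cardsD1 j u) ju addnC.
Qed.

Lemma adjacentP u v : reflect (exists j, v = symd u [set j]) (adjacent u v).
Proof.
apply: (iffP idP) => [/cards1P [j uv]|[j ->]]; first by exists j; rewrite -uv symdK.
by apply/cards1P; exists j; rewrite symdK.
Qed.

Lemma symd_face (J : {set 'I_n}) w u v :
  symd w u \subset J -> symd w v \subset J -> symd u v \subset J.
Proof.
move=> /subsetP wu /subsetP wv; apply/subsetP=> j; rewrite in_symd => uv.
have [jwu|jwu] := boolP (j \in symd w u); first exact: wu.
by apply: wv; move: jwu uv; rewrite !in_symd; case: (j \in w); case: (j \in u).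
Qed.

Lemma face_symd_set1 (J : {set 'I_n}) w u j :
  u \in face J w -> j \in J -> symd u [set j] \in face J w.
Proof.
rewrite !inE => /subsetP wu jJ; apply/subsetP=> k; rewrite !in_symd inE.
have [-> //|_ /= wuk] := eqVneq k j; apply: wu.
by rewrite in_symd; move: wuk; case: (k \in w); case: (k \in u).
Qed.

End SymmetricDifference.

Section OrientationOfOutmap.
Variables (n : nat) (s : vertex n -> {set 'I_n}).
Implicit Types (u v w x : {set 'I_n}) (J : {set 'I_n}).

Definition orient_of : rel (vertex n) :=
  fun u x => adjacent u x && (symd u x \subset s u).

Lemma orient_of_adjacent u x : orient_of u x -> adjacent u x.
Proof. by case/andP. Qed.

Lemma orient_of_set1 u j : orient_of u (symd u [set j]) = (j \in s u).
Proof. by rewrite /orient_of symdK sub1set andb_idl // => _; apply/adjacentP; exists j. Qed.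

Lemma outmap_orient_of u : outmap orient_of u = s u.
Proof. by apply/setP=> j; rewrite inE orient_of_set1. Qed.

Lemma sink_in_faceE J w u :
  is_sink_in orient_of (face J w) u = (u \in face J w) && (s u :&: J == set0).
Proof.
rewrite /is_sink_in; case: (boolP (u \in face J w)) => //= wu.
apply/forallP/eqP=> [sink|suJ x].
  apply/setP=> j; rewrite !inE; apply/negP=> /andP[sj jJ].
  have /(implyP (sink _)) : symd u [set j] \in face J w by exact: face_symd_set1.
  by rewrite orient_of_set1 sj.
apply/implyP=> wx; apply/negP=> /andP[/adjacentP[j xE]].
rewrite xE symdK sub1set => sj; move: wu wx; rewrite !inE => wu wx.
have : j \in s u :&: J by rewrite inE sj (subsetP (symd_face wu wx)) // xE symdK inE.
by rewrite suJ inE.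
Qed.

(* The Szabo-Welzl criterion. *)
Hypothesis s_sep : forall u v, u != v -> symd (s u) (s v) :&: symd u v != set0.

Lemma orient_of_orientation : is_orientation orient_of.
Proof.
split=> [|u _ /adjacentP[j ->]]; first exact: orient_of_adjacent.
set x := symd u [set j]; have ux : symd x u = [set j] by rewrite symdC symdK.
rewrite orient_of_set1 -[u in orient_of _ u](symdK x) ux orient_of_set1.
have /set0Pn[k] : symd (s u) (s x) :&: symd u x != set0.
  by apply: s_sep; apply/eqP=> /esym/eqP; rewrite -symd_eq0 ux -cards_eq0 cards1.
rewrite in_setI in_symd symdK inE => /andP[+ /eqP kj]; rewrite kj.
by case: (j \in s u); case: (j \in s x).
Qed.

Lemma face_outmap_inj J w : {in face J w &, injective (fun u => s u :&: J)}.
Proof.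
move=> u v wu wv /= /setP suv; apply/eqP/negPn/negP => neq_uv.
have /set0Pn[k] := s_sep neq_uv; rewrite in_setI => /andP[skuv kuv].
move: wu wv; rewrite !inE => wu wv; have kJ := subsetP (symd_face wu wv) _ kuv.
by move: skuv (suv k); rewrite in_symd !inE kJ !andbT => /eqP.
Qed.

Lemma orient_of_USO : is_USO orient_of.
Proof.
split=> [|J w _]; first exact: orient_of_orientation.
set F := face J w; set f := fun u => s u :&: J.
have cardF : #|F| = #|powerset J|.
  have -> : F = symd w @^-1: powerset J by apply/setP=> u; rewrite inE [in RHS]inE powersetE.
  exact/card_preimset/(can_inj (symdK w)).
have fF : f @: F = powerset J.
  apply/eqP; rewrite eqEcard (card_in_imset (@face_outmap_inj J w)) cardF leqnn andbT.
  by apply/subsetP=> _ /imsetP[u _ ->]; rewrite powersetE subsetIr.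
have /imsetP[t tF ft0] : set0 \in f @: F by rewrite fF powersetE sub0set.
exists t; split=> [|u]; first by rewrite sink_in_faceE tF -/(f t) -ft0 eqxx.
rewrite sink_in_faceE => /andP[uF /eqP fu0].
by apply: (face_outmap_inj tF uF); rewrite /= fu0 ft0.
Qed.

End OrientationOfOutmap.

Section NearIdentityInvolution.
Variables (n : nat) (p : vertex n -> vertex n).
Hypothesis pK : involutive p.
Hypothesis p_near : forall u, #|symd u (p u)| <= 1.
Implicit Types u v : {set 'I_n}.

Lemma near_involution_swap u v : symd u (p u) = symd u v -> symd v (p v) = symd u v.
Proof.
move=> uv; have puv : p u = v by rewrite -[p u](symdK u) uv symdK.
by rewrite -puv pK symdC.
Qed.

Lemma near_involution_sep u v : u != v -> symd (p u) (p v) :&: symd u v != set0.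
Proof.
move=> neq_uv; set D := symd u v; set a := symd u (p u); set b := symd v (p v).
have pE : symd (p u) (p v) = symd D (symd a b).
  apply/setP=> k; rewrite !in_symd.
  by case: (k \in u); case: (k \in v); case: (k \in p u); case: (k \in p v).
apply/negP=> /eqP disj.
have D_ab : D \subset symd a b.
  apply/subsetP=> k kD; move/setP/(_ k): disj.
  by rewrite pE in_setI in_symd kD in_set0 andbT; case: (k \in symd a b).
have D0 : D != set0 by rewrite symd_eq0.
have [DE|] := eqVneq D (symd a b).
  have : p u == p v by rewrite -symd_eq0 pE -DE symd_eq0.
  by rewrite (inj_eq (can_inj pK)) (negbTE neq_uv).
(* Otherwise D is a singleton, which forces p to swap u and v, hence a = b = D. *)
move=> neq_D; have D_lt : #|D| < #|symd a b| by rewrite proper_card // properEneq neq_D.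
have ab_le2 : #|symd a b| <= 2.
  rewrite (leq_trans (subset_leq_card (setUSS (subsetDl a b) (subsetDl b a)))) //.
  by rewrite (leq_trans (leq_card_setU _ _)) // -[2]/(1 + 1) leq_add ?p_near.
have /cards1P[j DE] : #|D| == 1.
  by rewrite eqn_leq -ltnS (leq_trans D_lt) // lt0n cards_eq0.
have jab : j \in symd a b by rewrite (subsetP D_ab) // DE set11.
have set1_near x : j \in symd x (p x) -> symd x (p x) = D.
  by move=> jx; apply/eqP; rewrite eq_sym DE eqEcard sub1set jx cards1 p_near.
have [aD bD] : a = D /\ b = D.
  have [ja|jb] : j \in a \/ j \in b.
  - by move: jab; rewrite in_symd; case: (j \in a); case: (j \in b); auto.
  - by have aD := set1_near _ ja; split=> //; exact: near_involution_swap.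
  - have bD := set1_near _ jb; split=> //.
    by rewrite /D symdC; apply: near_involution_swap; rewrite bD /D symdC.
by move: jab; rewrite aD bD in_symd eqxx.
Qed.

End NearIdentityInvolution.

Lemma connect_rank_le (T : finType) (r : rel T) (rank : T -> nat) :
  (forall u x, r u x -> rank x < rank u) -> forall u v, connect r u v -> rank v <= rank u.
Proof.
move=> rank_lt u v /connectP[s path_s ->] {v}.
elim: s u path_s => //= x s IHs u /andP[/rank_lt ux /IHs xs].
exact: leq_trans xs (ltnW ux).
Qed.

Lemma acyclic_of_rank n (r : rel (vertex n)) (rank : vertex n -> nat) :
  (forall u x, r u x -> rank x < rank u) -> acyclic r.
Proof.
move=> rank_lt u v /rank_lt uv; apply/negP=> /(connect_rank_le rank_lt).
by rewrite leqNgt uv.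
Qed.

Lemma reachmap_connect n (r : rel (vertex n)) u w :
  connect r u w -> reachmap r w \subset reachmap r u.
Proof.
move=> uw; apply/subsetP=> j; rewrite /reachmap !in_setU !in_set.
case/orP=> [jw|/existsP[x /andP[wx jx]]]; apply/orP; right; apply/existsP.
  by exists w; rewrite uw inE.
by exists x; rewrite (connect_trans uw wx).
Qed.

Lemma dist_le_card n (r : rel (vertex n)) v u i :
  (forall x y, r x y -> adjacent x y) -> dist_le r v u i -> #|v| <= #|u| + i.
Proof.
move=> r_adj [s [+ + <-]]; elim: s v i => [|x s IHs] v [|i] //=; rewrite ?leq_addr //.
move=> size_s /andP[/r_adj/adjacentP[j xE] /(IHs _ _ size_s) le_x].
by rewrite addnS -addn1 (leq_trans _ (leq_add le_x (leqnn 1))) // xE card_symd_set1.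
Qed.

Section HubOrientation.
(* The cube of dimension n.+1, so that the coordinate ord0 exists. *)
Variable n : nat.
Implicit Types (u v x : {set 'I_n.+1}) (i j k : 'I_n.+1).

Definition shift u : vertex n.+1 := [set j : 'I_n.+1 | [exists i in u, j == i.+1 :> nat]].

Definition hub_out u : vertex n.+1 :=
  if #|u| == 1 then u :|: shift u
  else if #|u| == 2 then u :\: shift u
  else if #|u| == 3 then ord0 |: u
  else if #|u| == 4 then u :\ ord0
  else u.

Definition hub_uso : rel (vertex n.+1) := orient_of hub_out.

Lemma mem_shift1 i j : (j \in shift [set i]) = (j == i.+1 :> nat).
Proof.
by rewrite inE; apply/existsP/idP=> [[i' /andP[/set1P-> //]]|ji]; exists i; rewrite set11.
Qed.

Lemma mem_shift2 i i' j :
  (j \in shift [set i; i']) = (j == i.+1 :> nat) || (j == i'.+1 :> nat).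
Proof.
rewrite inE; apply/existsP/idP=> [[k /andP[/set2P[]-> ->]]|/orP[]ji]; rewrite ?orbT //.
  by exists i; rewrite ji set21.
by exists i'; rewrite ji set22.
Qed.

Lemma ord_succP i : i = ord_max \/ exists j, j = i.+1 :> nat.
Proof.
have [lt_in|] := ltnP i n; first by right; exists (Ordinal (lt_in : i.+1 < n.+1)).
by move=> le_ni; left; apply: val_inj; apply/eqP; rewrite eqn_leq le_ni -ltnS ltn_ord.
Qed.

Lemma cards2_ltP u : #|u| = 2 -> exists i j, i < j /\ u = [set i; j].
Proof.
move/eqP/cards2P=> [i [j [neq_ij ->]]]; have [lt_ij|lt_ji|ij] := ltngtP i j.
- by exists i, j.
- by exists j, i; rewrite setUC.
- by move: neq_ij; rewrite (val_inj ij) eqxx.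
Qed.

Lemma hub_outE1 u : #|u| = 1 -> hub_out u = u :|: shift u.
Proof. by rewrite /hub_out => ->. Qed.

Lemma hub_outE2 u : #|u| = 2 -> hub_out u = u :\: shift u.
Proof. by rewrite /hub_out => ->. Qed.

Lemma hub_outE3 u : #|u| = 3 -> hub_out u = ord0 |: u.
Proof. by rewrite /hub_out => ->. Qed.

Lemma hub_outE4 u : #|u| = 4 -> hub_out u = u :\ ord0.
Proof. by rewrite /hub_out => ->. Qed.

Lemma hub_outE u : #|u| = 0 \/ 4 < #|u| -> hub_out u = u.
Proof. by rewrite /hub_out; case: #|u| => [|[|[|[|[|m]]]]] [] //. Qed.

Lemma hub_out_set1_succ i j : j = i.+1 :> nat -> hub_out [set i] = [set i; j].
Proof.
move=> ji; rewrite hub_outE1 ?cards1 //; congr (_ :|: _).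
by apply/setP=> k; rewrite mem_shift1 inE -ji; apply/eqP/eqP=> [/val_inj|->].
Qed.

Lemma hub_out_set1_max : hub_out [set ord_max] = [set ord_max].
Proof.
rewrite hub_outE1 ?cards1 //; apply/setUidPl/subsetP=> k; rewrite mem_shift1 => /eqP kE.
by have := ltn_ord k; rewrite kE ltnn.
Qed.

Lemma hub_out_set2_succ i j : j = i.+1 :> nat -> hub_out [set i; j] = [set i].
Proof.
move=> ji; have neq_ij : i != j by rewrite -val_eqE /= ji neq_ltn ltnSn.
rewrite hub_outE2 ?cards2 ?neq_ij //; apply/setP=> k.
by rewrite in_setD mem_shift2 !inE -!val_eqE /= ji; lia.
Qed.

Lemma hub_out_set2_gap i j : i < j -> j != i.+1 :> nat -> hub_out [set i; j] = [set i; j].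
Proof.
move=> lt_ij ji; have neq_ij : i != j by rewrite -val_eqE /= neq_ltn lt_ij.
rewrite hub_outE2 ?cards2 ?neq_ij //; apply/setDidPl; rewrite -setI_eq0.
apply/eqP/setP=> k; rewrite in_setI mem_shift2 !inE -!val_eqE /=; move: ji lt_ij; lia.
Qed.

Lemma hub_out_cases u :
  hub_out u = u \/ exists j, hub_out u = symd u [set j] /\ hub_out (symd u [set j]) = u.
Proof.
case cu: #|u| => [|[|[|[|[|m]]]]]; try by left; apply: hub_outE; rewrite cu; auto.
- move/eqP/cards1P: cu => [i ->]; have [->|[j ji]] := ord_succP i.
    by left; rewrite hub_out_set1_max.
  have ij : j \notin [set i] by rewrite inE -val_eqE /= ji neq_ltn ltnSn orbT.
  right; exists j; rewrite symd_set1_out // setUC.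
  by rewrite (hub_out_set1_succ ji) (hub_out_set2_succ ji).
- have [i [j [lt_ij ->]]] := cards2_ltP cu.
  have [ji|ji] := eqVneq (j : nat) i.+1; last by left; rewrite hub_out_set2_gap.
  right; exists j; rewrite symd_set1_in ?set22 // (hub_out_set2_succ ji).
  have -> : [set i; j] :\ j = [set i].
    by apply/setP=> k; rewrite !inE -!val_eqE /=; move: ji; lia.
  by rewrite (hub_out_set1_succ ji).
- rewrite hub_outE3 //; have [u0|u0] := boolP (ord0 \in u).
    by left; apply/setUidPr; rewrite sub1set.
  right; exists ord0; rewrite symd_set1_out //; split=> //.
  by rewrite hub_outE4 ?setU1K // cardsU1 u0 cu.
- rewrite hub_outE4 //; have [u0|u0] := boolP (ord0 \in u); last first.
    by left; apply/setDidPl; rewrite disjoint_sym disjoints1.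
  right; exists ord0; rewrite symd_set1_in //; split=> //.
  by rewrite hub_outE3 ?setD1K //; move: cu; rewrite (cardsD1 ord0) u0 => -[].
Qed.

Lemma hub_out_involutive : involutive hub_out.
Proof. by move=> u; have [uE|[j [-> ->]]] := hub_out_cases u; rewrite ?uE. Qed.

Lemma hub_out_near u : #|symd u (hub_out u)| <= 1.
Proof.
have [->|[j [-> _]]] := hub_out_cases u; last by rewrite symdK cards1.
by rewrite (_ : symd u u = set0) ?cards0 //; apply/eqP; rewrite symd_eq0.
Qed.

Lemma hub_uso_USO : is_USO hub_uso.
Proof. exact/orient_of_USO/near_involution_sep/hub_out_near/hub_out_involutive. Qed.

(* Along the chain {0}, {0,1}, {1}, {1,2}, ..., {n} the rank is 2(n+1) minus the position;
   pairs off the chain lie above all singletons and sets of size at least 3 above all smaller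
   ones, a 3-set without 0 lying above its union with {0}. *)
Definition hub_rank u : nat :=
  if 2 < #|u| then 2 * n + #|u| + (if (ord0 \in u) && (#|u| <= 4) then 1 else 3)
  else if #|u| == 1 then 2 * (n.+1 - \sum_(i in u) i)
  else if #|u| == 2 then
    (if hub_out u == u then 2 * n + 3 else 2 * n.+1 - \sum_(i in u) i)
  else 0.

Lemma hub_rank_set1 i : hub_rank [set i] = 2 * (n.+1 - i).
Proof. by rewrite /hub_rank cards1 big_set1. Qed.

Lemma hub_rank_set2_succ i j : j = i.+1 :> nat -> hub_rank [set i; j] = 2 * n.+1 - (i + j).
Proof.
move=> ji; have neq_ij : i != j by rewrite -val_eqE /= ji neq_ltn ltnSn.
rewrite /hub_rank cards2 neq_ij (hub_out_set2_succ ji) big_setU1 ?big_set1 ?inE //=.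
by rewrite eqEcard subsetUl cards1 cards2 neq_ij.
Qed.

Lemma hub_rank_set2_gap i j : i < j -> j != i.+1 :> nat -> hub_rank [set i; j] = 2 * n + 3.
Proof.
move=> lt_ij ji; have neq_ij : i != j by rewrite -val_eqE /= neq_ltn lt_ij.
by rewrite /hub_rank cards2 neq_ij (hub_out_set2_gap lt_ij ji) eqxx.
Qed.

Lemma hub_rank_low u : #|u| <= 2 -> hub_rank u <= 2 * n + 3.
Proof. by rewrite /hub_rank leqNgt => /negbTE->; do !case: ifP => //; lia. Qed.

Lemma hub_rank_out_low u j :
  #|u| <= 2 -> j \in hub_out u -> hub_rank (symd u [set j]) < hub_rank u.
Proof.
case cu: #|u| => [|[|[|m]]] // _.
- by rewrite hub_outE ?cu; [rewrite (cards0_eq cu) inE | left].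
- move/eqP/cards1P: cu => [i ->]; rewrite hub_rank_set1.
  have [->|[i' i'i]] := ord_succP i.
    rewrite hub_out_set1_max => /set1P->; rewrite symd_set1_in ?set11 // setDv.
    by rewrite /hub_rank cards0 /=; lia.
  have ii' : i' \notin [set i] by rewrite inE -val_eqE /= i'i neq_ltn ltnSn orbT.
  rewrite (hub_out_set1_succ i'i) => /set2P[->|->].
    by rewrite symd_set1_in ?set11 // setDv /hub_rank cards0 /=; have := ltn_ord i; lia.
  rewrite symd_set1_out // setUC hub_rank_set2_succ //; have := ltn_ord i'; lia.
- have [i [i' [lt_ii' ->]]] := cards2_ltP cu.
  have [i'i|i'i] := eqVneq (i' : nat) i.+1.
    rewrite (hub_out_set2_succ i'i) => /set1P->.
    have -> : symd [set i; i'] [set i] = [set i'].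
      by apply/setP=> k; rewrite in_symd !inE -!val_eqE /=; move: i'i; lia.
    by rewrite hub_rank_set1 hub_rank_set2_succ //; have := ltn_ord i'; lia.
  have ii' : i != i' by rewrite -val_eqE /= neq_ltn lt_ii'.
  rewrite (hub_out_set2_gap lt_ii' i'i) hub_rank_set2_gap // => /set2P[]->.
    by rewrite symd_set1_in ?set21 // setU1K ?hub_rank_set1 ?inE //; lia.
  by rewrite symd_set1_in ?set22 // setUC setU1K ?hub_rank_set1 ?inE 1?eq_sym //; lia.
Qed.

Lemma hub_rank_high u :
  2 < #|u| -> hub_rank u = 2 * n + #|u| + (if (ord0 \in u) && (#|u| <= 4) then 1 else 3).
Proof. by rewrite /hub_rank => ->. Qed.

Lemma hub_rank_out_high u j :
  2 < #|u| -> j \in hub_out u -> hub_rank (symd u [set j]) < hub_rank u.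
Proof.
move=> u_gt2; rewrite (hub_rank_high u_gt2).
have cuj (ju : j \in u) : #|u :\ j| = #|u|.-1 by rewrite (cardsD1 j u) ju.
case cu: #|u| u_gt2 => [|[|[|[|[|m]]]]] // _.
- have [ju _|ju] := boolP (j \in u).
    rewrite symd_set1_in //; apply: leq_ltn_trans (hub_rank_low _) _; rewrite ?cuj ?cu //.
    by case: ifP; lia.
  rewrite hub_outE3 // in_setU1 (negbTE ju) orbF => /eqP j0; rewrite j0 in ju *.
  have cu0 : #|ord0 |: u| = 4 by rewrite cardsU1 ju cu.
  by rewrite symd_set1_out // hub_rank_high cu0 // setU11 (negbTE ju) /=; lia.
- rewrite hub_outE4 // => /setD1P[j0 ju]; rewrite symd_set1_in // hub_rank_high cuj // cu //.
  by rewrite !inE eq_sym j0 /=; case: (ord0 \in u) => /=; lia.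
- rewrite hub_outE ?cu => [ju|]; last by right.
  rewrite symd_set1_in // hub_rank_high cuj // cu //.
  by do 2!case: ifP; lia.
Qed.

Lemma hub_rank_out u j : j \in hub_out u -> hub_rank (symd u [set j]) < hub_rank u.
Proof. by case: (leqP #|u| 2) => [/hub_rank_out_low|/hub_rank_out_high]; apply. Qed.

Lemma hub_uso_AUSO : is_AUSO hub_uso.
Proof.
split; first exact: hub_uso_USO.
apply: (acyclic_of_rank (rank := hub_rank)) => u _ /andP[/adjacentP[j ->]].
by rewrite symdK sub1set; exact: hub_rank_out.
Qed.

Lemma hub_uso_step u j : j \in hub_out u -> connect hub_uso u (symd u [set j]).
Proof. by move=> j_out; apply: connect1; rewrite /hub_uso orient_of_set1. Qed.

Lemma hub_out_nonzero u j : 2 < #|u| -> j != ord0 -> (j \in hub_out u) = (j \in u).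
Proof.
case cu: #|u| => [|[|[|[|[|m]]]]] // _ j0.
- by rewrite hub_outE3 // !inE (negbTE j0).
- by rewrite hub_outE4 // !inE j0.
- by rewrite hub_outE // cu; right.
Qed.

Lemma connect_shrink u v :
  v \subset u -> ord0 \notin u :\: v -> 1 < #|v| -> connect hub_uso u v.
Proof.
move=> + + v_gt1; move: {2}#|u :\: v| (erefl #|u :\: v|) => k.
elim: k u => [|k IHk] u cuv vu u0.
  have /eqP-> : u == v by rewrite eqEsubset -setD_eq0 -cards_eq0 cuv vu.
  exact: connect0.
have /set0Pn[j] : u :\: v != set0 by rewrite -cards_eq0 cuv.
rewrite in_setD => /andP[jv ju].
have j0 : j != ord0 by apply: contraNneq u0 => <-; rewrite inE jv.
have u_gt2 : 2 < #|u|.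
  have vu' : v \proper u by apply/properP; split=> //; exists j.
  by have := proper_card vu'; lia.
have uj : connect hub_uso u (u :\ j).
  by rewrite -symd_set1_in //; apply: hub_uso_step; rewrite hub_out_nonzero.
apply: connect_trans uj (IHk _ _ _ _).
- have juv : j \in u :\: v by rewrite in_setD jv ju.
  rewrite setDDl setUC -setDDl; move: cuv; rewrite (cardsD1 j (u :\: v)) juv.
  by rewrite add1n => -[].
- by apply/subsetP=> x xv; rewrite in_setD1 (subsetP vu) // andbT; apply: contraNneq jv => <-.
- by apply: contra u0; rewrite !in_setD => /and3P[-> _ ->].
Qed.

Lemma connect_succ i j : j = i.+1 :> nat -> connect hub_uso [set i] [set j].
Proof.
move=> ji; have ij : i != j by rewrite -val_eqE /= ji neq_ltn ltnSn.
apply: (connect_trans (hub_uso_step (j := j) _)); first by rewrite (hub_out_set1_succ ji) set22.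
rewrite symd_set1_out ?inE 1?eq_sym // setUC.
have := hub_uso_step (u := [set i; j]) (j := i); rewrite symd_set1_in ?set21 // setU1K ?inE //.
by apply; rewrite (hub_out_set2_succ ji) set11.
Qed.

Lemma connect_chain k : connect hub_uso [set ord0] [set k].
Proof.
move: {2}(val k) (erefl (val k)) => m; elim: m k => [|m IHm] k km.
  by rewrite (_ : k = ord0) //; apply: val_inj.
have lt_m : m < n.+1 by have := ltn_ord k; rewrite km; lia.
exact: connect_trans (IHm (Ordinal lt_m) erefl) (connect_succ _).
Qed.

Lemma reachmap_hub : reachmap hub_uso [set ord0] = setT.
Proof.
apply/eqP; rewrite eqEsubset subsetT; apply/subsetP=> k _.
apply: (subsetP (reachmap_connect (connect_chain k))).
by rewrite /reachmap in_setU outmap_orient_of hub_outE1 ?cards1 // !inE eqxx.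
Qed.

Lemma connect_hub_of_zero u : ord0 \in u -> 2 < #|u| -> connect hub_uso u [set ord0].
Proof.
move=> u0 /card_gt2P[x [y [z [[xu yu zu] [xy yz zx]]]]].
have [c cu c_gt1] : exists2 c, c \in u & 1 < c.
  have : [|| 1 < x, 1 < y | 1 < z] by move: xy yz zx; rewrite -!val_eqE /=; lia.
  by case/or3P; [exists x | exists y | exists z].
have c0 : ord0 != c by rewrite -val_eqE /= neq_ltn (ltn_trans _ c_gt1).
apply: (connect_trans (connect_shrink (v := [set ord0; c]) _ _ _)).
- by rewrite subUset !sub1set u0 cu.
- by rewrite !inE eqxx.
- by rewrite cards2 c0.
have := hub_uso_step (u := [set ord0; c]) (j := c); rewrite symd_set1_in ?set22 //.
have -> : [set ord0; c] :\ c = [set ord0] by rewrite setUC setU1K ?inE 1?eq_sym.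
by apply; rewrite hub_out_set2_gap ?set22 //=; lia.
Qed.

Lemma connect_hub u : 2 < #|u| -> connect hub_uso u [set ord0].
Proof.
have [u0|u0] := boolP (ord0 \in u); first exact: connect_hub_of_zero.
move=> /card_gt2P[x [y [z [[xu yu zu] [xy yz zx]]]]].
set w := [set x; y; z]; have cw : #|w| = 3.
  by rewrite /w -setUA cardsU1 cards2 yz !inE negb_or xy eq_sym zx.
have wu : w \subset u by rewrite !subUset !sub1set xu yu zu.
have w0 : ord0 \notin w by apply: contra u0; apply: (subsetP wu).
apply: (connect_trans (connect_shrink (v := w) wu _ _)); rewrite ?cw //.
  by apply: contra u0; rewrite in_setD => /andP[].
apply: connect_trans (hub_uso_step (j := ord0) _) (connect_hub_of_zero _ _).
- by rewrite hub_outE3 // setU11.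
- by rewrite symd_set1_out // setU11.
- by rewrite symd_set1_out // cardsU1 w0 cw.
Qed.

Lemma reachmap_hub_uso u : 2 < #|u| -> reachmap hub_uso u = setT.
Proof.
move=> u_gt2; apply/eqP; rewrite eqEsubset subsetT -reachmap_hub.
exact/reachmap_connect/connect_hub.
Qed.

End HubOrientation.

Theorem theorem16 :
  forall n : nat, 0 < n ->
  exists psi : rel (vertex n),
    is_AUSO psi /\ (forall i : nat, i + 2 < n -> ~ i_nice psi i).
Proof.
move=> [//|n] _; exists (@hub_uso n); split=> [|i lt_i nice]; first exact: hub_uso_AUSO.
have top_gt2 : 2 < #|[set: 'I_n.+1]| by rewrite cardsT card_ord; lia.
have top_not_sink : ~ is_global_sink (@hub_uso n) [set: 'I_n.+1].
  rewrite /is_global_sink outmap_orient_of => /setP/(_ ord_max).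
  by rewrite hub_out_nonzero ?inE // -val_eqE /=; lia.
have [u [top_u]] := nice _ top_not_sink.
have u_gt2 : 2 < #|u|.
  have := dist_le_card (@orient_of_adjacent _ _) top_u.
  by rewrite cardsT card_ord; lia.
by rewrite !reachmap_hub_uso // properxx.
Qed.
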